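(* Let $K_c\subset\mathbb{E}^3$ be a cap body of a ball which is centrally symmetric. Then the illumination number of $K_c$ satisfies $I(K_c)\le 6$. Moreover this bound is sharp: there exists a centrally symmetric cap body of a ball in $\mathbb{E}^3$ whose illumination number equals $6$.
   Context: A cap body of a ball is the convex hull of a closed Euclidean ball $B^d[\boldsymbol c,r]\subset\mathbb{E}^d$ and a countable set of points $\{\boldsymbol v_i\mid i\in I\}\subset \mathbb{E}^d\setminus B^d[\boldsymbol c,r]$ such that for any two distinct $i,j\in I$ the segment $\overline{\boldsymbol v_i\boldsymbol v_j}$ intersects $B^d[\boldsymbol c,r]$. For a convex body $K$ (compact convex set with nonempty interior), a direction $\boldsymbol u\in\mathbb{S}^{d-1}$ illuminates a boundary point $\boldsymbol p$ of $K$ if $\boldsymbol p+\lambda\boldsymbol u$ lies in the interior of $K$ for some $\lambda>0$; the illumination number $I(K)$ is the smallest number of directions such that every boundary point of $K$ is illuminated by at least one of them. *)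

From HB Require Import structures.
From mathcomp Require Import all_boot all_order all_algebra.
From mathcomp Require Import all_classical all_reals all_analysis.
Set Implicit Arguments. Unset Strict Implicit. Unset Printing Implicit Defensive.
Import Order.TTheory GRing.Theory Num.Theory numFieldNormedType.Exports.
Local Open Scope classical_set_scope.
Local Open Scope ring_scope.

Section CapBodies.
Variable R : realType.
Notation pt := 'rV[R]_3.

Definition enorm (x : pt) : R := Num.sqrt (\sum_(i < 3) (x ord0 i) ^+ 2).
Definition eball (c : pt) (r : R) : set pt := [set x | enorm (x - c) <= r].

Definition conv_hull (S : set pt) : set pt :=
  [set x | exists (n : nat) (w : 'I_n -> R) (p : 'I_n -> pt),
      (forall i, 0 <= w i) /\ \sum_(i < n) w i = 1 /\
      (forall i, S (p i)) /\ x = \sum_(i < n) w i *: p i].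

Definition segment (v w : pt) : set pt :=
  [set x | exists t : R, 0 <= t <= 1 /\ x = (1 - t) *: v + t *: w].

Definition is_cap_body_of_ball (K : set pt) : Prop :=
  exists (c : pt) (r : R) (V : set pt),
    0 < r /\ countable V /\ V `&` eball c r = set0 /\
    (forall v w, V v -> V w -> v <> w -> segment v w `&` eball c r !=set0) /\
    K = conv_hull (eball c r `|` V).

Definition centrally_symmetric (K : set pt) : Prop :=
  exists o : pt, forall x, K x <-> K (2%:R *: o - x).

Definition boundary (K : set pt) : set pt := closure K `\` interior K.

Definition illuminates (K : set pt) (u p : pt) : Prop :=
  exists lambda : R, 0 < lambda /\ interior K (p + lambda *: u).

Definition illuminating_family (K : set pt) (D : seq pt) : Prop :=
  (forall u, u \in D -> enorm u = 1) /\
  (forall p, boundary K p -> exists2 u, u \in D & illuminates K u p).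

Definition illumination_number_le (K : set pt) (n : nat) : Prop :=
  exists D : seq pt, (size D <= n)%N /\ illuminating_family K D.

Definition illumination_number_eq (K : set pt) (n : nat) : Prop :=
  illumination_number_le K n /\
  forall m : nat, illumination_number_le K m -> (n <= m)%N.

End CapBodies.

From HB Require Import structures.
From mathcomp Require Import all_boot all_order all_algebra.
From mathcomp Require Import all_classical all_reals all_analysis.
From mathcomp Require Import ring lra.
Set Implicit Arguments. Unset Strict Implicit. Unset Printing Implicit Defensive.
Import Order.TTheory GRing.Theory Num.Theory numFieldNormedType.Exports.
Local Open Scope classical_set_scope.
Local Open Scope ring_scope.

(* A centre of symmetry of a cap body K = conv (B[c, r] U V) must be c: otherwise a
   half-space tangent to the ball and containing every vertex would contain K but not its
   reflection.  Hence V is symmetric about c.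
   The directions of two distinct vertices at distance >= rho > r from c are at squared
   distance >= 2 (1 - r / rho) (their segment meets the ball), so only finitely many
   vertices lie that far; thus there is a farthest vertex v1, at distance a, and its reflection is
   a vertex too.  Let e1 point to v1.  For any vertex w with axial coordinate x and squared
   distance h to the axis, the segments from w to v1 and to its reflection meet the ball,
   which forces x^2 + h/2 <= r^2, with equality only if x = 0 and h = a^2 = 2 r^2.
   Choosing e2 orthogonal to e1 so as to exclude this configuration and e3 = e1 x e2,
   every vertex lies in the open cylinder of radius r around one of the three axes.
   The six directions +-e1, +-e2, +-e3 then illuminate K: a boundary point in the ball
   enters the open ball along an axis on which it has a nonzero coordinate, and a
   boundary point outside the ball is a limit of points of a single cap conv ({v} U B),
   which are all pushed inside by the direction that pushes v into the open ball.
   For sharpness, take the unit ball and the six points +-sqrt2 e_i.  At the vertex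
   s sqrt2 e_i there are four supporting planes, so a direction u illuminating it
   satisfies |u_j| < - s u_i for j <> i; these six open cones are disjoint. *)

Section Geometry.
Variable R : realType.
Notation pt := 'rV[R]_3.
Implicit Types x y z c v w : pt.

Definition i0 : 'I_3 := @Ordinal 3 0 isT.
Definition i1 : 'I_3 := @Ordinal 3 1 isT.
Definition i2 : 'I_3 := @Ordinal 3 2 isT.

Lemma ord3P (i : 'I_3) : i = i0 \/ i = i1 \/ i = i2.
Proof.
by case: i => [[|[|[|k]]] Hk]; [left|right; left|right; right|]; try apply/val_inj.
Qed.

Lemma row3_ext (x y : pt) :
  x ord0 i0 = y ord0 i0 -> x ord0 i1 = y ord0 i1 -> x ord0 i2 = y ord0 i2 -> x = y.
Proof. by move=> h0 h1 h2; apply/rowP => i; case: (ord3P i) => [->|[->|->]]. Qed.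

Definition vec3 (a b c : R) : pt :=
  \row_(i < 3) (if i == i0 then a else if i == i1 then b else c).

Lemma vec3E0 (a b c : R) : vec3 a b c ord0 i0 = a. Proof. by rewrite mxE. Qed.

Lemma vec3E1 (a b c : R) : vec3 a b c ord0 i1 = b. Proof. by rewrite mxE. Qed.

Lemma vec3E2 (a b c : R) : vec3 a b c ord0 i2 = c. Proof. by rewrite mxE. Qed.

Definition dot (x y : pt) : R :=
  x ord0 i0 * y ord0 i0 + x ord0 i1 * y ord0 i1 + x ord0 i2 * y ord0 i2.
Definition sqnorm (x : pt) : R := dot x x.

Lemma dotC x y : dot x y = dot y x.
Proof. rewrite /dot; ring. Qed.

Lemma dotZl (k : R) x y : dot (k *: x) y = k * dot x y.
Proof. rewrite /dot !mxE; ring. Qed.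

Lemma dotNl x y : dot (- x) y = - dot x y.
Proof. rewrite /dot !mxE; ring. Qed.

Lemma sqnormN x : sqnorm (- x) = sqnorm x.
Proof. rewrite /sqnorm /dot !mxE; ring. Qed.

Lemma sqnormD x y : sqnorm (x + y) = sqnorm x + 2 * dot x y + sqnorm y.
Proof. rewrite /sqnorm /dot !mxE; ring. Qed.

Lemma sqnorm_ge0 x : 0 <= sqnorm x.
Proof. rewrite /sqnorm /dot; nra. Qed.

Lemma sqnorm_eq0 x : sqnorm x = 0 -> x = 0.
Proof.
rewrite /sqnorm /dot -!expr2 => h.
have := sqr_ge0 (x ord0 i0); have := sqr_ge0 (x ord0 i1); have := sqr_ge0 (x ord0 i2).
move=> h2 h1 h0.
have /eqP : x ord0 i0 ^+ 2 = 0 by lra.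
have /eqP : x ord0 i1 ^+ 2 = 0 by lra.
have /eqP : x ord0 i2 ^+ 2 = 0 by lra.
rewrite !sqrf_eq0 => /eqP e2 /eqP e1 /eqP e0.
by apply: row3_ext; rewrite mxE.
Qed.

Lemma sum_ord3 (f : 'I_3 -> R) : \sum_(k < 3) f k = f i0 + f i1 + f i2.
Proof. by rewrite !big_ord_recr big_ord0 /= add0r; congr (f _ + f _ + f _); apply: val_inj. Qed.

Lemma dot_sum x y : dot x y = \sum_(k < 3) x ord0 k * y ord0 k.
Proof. by rewrite sum_ord3. Qed.

Lemma enormE x : enorm x = Num.sqrt (sqnorm x).
Proof. by rewrite /enorm sum_ord3 /sqnorm /dot !expr2. Qed.

Lemma enorm_ge0 x : 0 <= enorm x.
Proof. by rewrite enormE sqrtr_ge0. Qed.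

Lemma enorm0 : enorm (0 : pt) = 0.
Proof. by rewrite enormE /sqnorm /dot !mxE !mul0r !addr0 sqrtr0. Qed.

Lemma enorm_sqr x : enorm x ^+ 2 = sqnorm x.
Proof. by rewrite enormE sqr_sqrtr // sqnorm_ge0. Qed.

Lemma enorm_unit x : sqnorm x = 1 -> enorm x = 1.
Proof. by move=> h; rewrite enormE h sqrtr1. Qed.

Lemma enorm_le_sqr x (r : R) : 0 <= r -> enorm x <= r <-> sqnorm x <= r ^+ 2.
Proof. by move=> r0; have := enorm_sqr x; have := enorm_ge0 x; split => h; nra. Qed.

Lemma enorm_lt_sqr x (r : R) : 0 <= r -> enorm x < r <-> sqnorm x < r ^+ 2.
Proof. by move=> r0; have := enorm_sqr x; have := enorm_ge0 x; split => h; nra. Qed.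

Lemma enorm_eq_sqr x (r : R) : 0 <= r -> sqnorm x = r ^+ 2 -> enorm x = r.
Proof.
move=> r0 h; apply/eqP; rewrite -(eqrXn2 (ltn0Sn 1)) ?enorm_ge0 //.
by rewrite enorm_sqr h.
Qed.

Lemma dot_sqr_le x y : dot x y ^+ 2 <= sqnorm x * sqnorm y.
Proof.
have lagrange : sqnorm x * sqnorm y - dot x y ^+ 2 =
    (x ord0 i1 * y ord0 i2 - x ord0 i2 * y ord0 i1) ^+ 2 +
    (x ord0 i2 * y ord0 i0 - x ord0 i0 * y ord0 i2) ^+ 2 +
    (x ord0 i0 * y ord0 i1 - x ord0 i1 * y ord0 i0) ^+ 2.
  rewrite /sqnorm /dot; ring.
have := sqr_ge0 (x ord0 i1 * y ord0 i2 - x ord0 i2 * y ord0 i1).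
have := sqr_ge0 (x ord0 i2 * y ord0 i0 - x ord0 i0 * y ord0 i2).
have := sqr_ge0 (x ord0 i0 * y ord0 i1 - x ord0 i1 * y ord0 i0).
lra.
Qed.

Lemma dot_le_enorm x y : dot x y <= enorm x * enorm y.
Proof.
have h := dot_sqr_le x y; rewrite -!enorm_sqr -exprMn in h.
have hxy : 0 <= enorm x * enorm y by rewrite mulr_ge0 ?enorm_ge0.
have [//|lt] := leP (dot x y) (enorm x * enorm y).
have : (enorm x * enorm y) ^+ 2 < dot x y ^+ 2 by nra.
lra.
Qed.

Lemma ler_enormD x y : enorm (x + y) <= enorm x + enorm y.
Proof.
apply/enorm_le_sqr; first by rewrite addr_ge0 ?enorm_ge0.
rewrite sqnormD -!enorm_sqr; have := dot_le_enorm x y; nra.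
Qed.

Lemma ler_enormB x y z : enorm (x - z) <= enorm (x - y) + enorm (y - z).
Proof. by rewrite -[x - z](subrKA y) ler_enormD. Qed.

Lemma enormZ (a : R) x : enorm (a *: x) = `|a| * enorm x.
Proof.
apply: enorm_eq_sqr; first by rewrite mulr_ge0 ?enorm_ge0.
rewrite exprMn real_normK ?num_real // enorm_sqr /sqnorm /dot !mxE; ring.
Qed.

Lemma enormN x : enorm (- x) = enorm x.
Proof. by rewrite -scaleN1r enormZ normrN normr1 mul1r. Qed.

Lemma enorm_subC x y : enorm (x - y) = enorm (y - x).
Proof. by rewrite -enormN opprB. Qed.

Lemma enorm_le_sum_abs x : enorm x <= `|x ord0 i0| + `|x ord0 i1| + `|x ord0 i2|.
Proof.
apply/enorm_le_sqr; first by rewrite !addr_ge0.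
have := real_normK (num_real (x ord0 i0)); have := real_normK (num_real (x ord0 i1)).
have := real_normK (num_real (x ord0 i2)).
have := normr_ge0 (x ord0 i0); have := normr_ge0 (x ord0 i1); have := normr_ge0 (x ord0 i2).
rewrite /sqnorm /dot; nra.
Qed.

Lemma coord_le_enorm x i : `|x ord0 i| <= enorm x.
Proof.
rewrite leNgt; apply/negP => /(ltrXn2r 2 (enorm_ge0 x)) /=.
rewrite real_normK ?num_real // enorm_sqr /sqnorm /dot.
have := sqr_ge0 (x ord0 i0); have := sqr_ge0 (x ord0 i1); have := sqr_ge0 (x ord0 i2).
by rewrite !expr2; case: (ord3P i) => [->|[->|->]]; lra.
Qed.

Lemma coord_unit_bound x i : sqnorm x = 1 -> -1 <= x ord0 i <= 1.
Proof.
rewrite /sqnorm /dot => h; apply/andP.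
have := sqr_ge0 (x ord0 i0); have := sqr_ge0 (x ord0 i1); have := sqr_ge0 (x ord0 i2).
by rewrite !expr2; case: (ord3P i) => [->|[->|->]] => *; split; nra.
Qed.

Lemma exists_unit_orthogonal (A d : pt) :
  exists e, sqnorm e = 1 /\ dot A e = 0 /\ 0 <= dot e d.
Proof.
suff [e [e1 Ae]] : exists e, sqnorm e = 1 /\ dot A e = 0.
  have [ed|ed] := leP 0 (dot e d); first by exists e.
  exists (- e); rewrite sqnormN dotNl dotC dotNl dotC Ae oppr0; split=> //; split=> //.
  lra.
set s2 := A ord0 i0 ^+ 2 + A ord0 i1 ^+ 2.
have [s0|snz] := eqVneq s2 0.
  have /eqP : A ord0 i0 ^+ 2 = 0.
    by move: s0; rewrite /s2; have := sqr_ge0 (A ord0 i1); have := sqr_ge0 (A ord0 i0); lra.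
  rewrite sqrf_eq0 => /eqP a0.
  exists (vec3 1 0 0); rewrite /sqnorm /dot !vec3E0 !vec3E1 !vec3E2 a0; split; ring.
set s := Num.sqrt s2.
have ss : s ^+ 2 = s2 by rewrite sqr_sqrtr // addr_ge0 ?sqr_ge0.
have sp : 0 < s by rewrite sqrtr_gt0 lt_neqAle eq_sym snz addr_ge0 ?sqr_ge0.
exists (vec3 (- A ord0 i1 / s) (A ord0 i0 / s) 0).
rewrite /sqnorm /dot !vec3E0 !vec3E1 !vec3E2; split; last by field; rewrite gt_eqF.
have -> : - A ord0 i1 / s * (- A ord0 i1 / s) + A ord0 i0 / s * (A ord0 i0 / s) + 0 * 0
    = s2 / s ^+ 2 by rewrite /s2; field; rewrite gt_eqF.
by rewrite ss divff.
Qed.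

Definition cross (a b : pt) : pt :=
  vec3 (a ord0 i1 * b ord0 i2 - a ord0 i2 * b ord0 i1)
       (a ord0 i2 * b ord0 i0 - a ord0 i0 * b ord0 i2)
       (a ord0 i0 * b ord0 i1 - a ord0 i1 * b ord0 i0).

Lemma dot_cross_l (a b : pt) : dot a (cross a b) = 0.
Proof. rewrite /cross /dot !vec3E0 !vec3E1 !vec3E2; ring. Qed.

Lemma dot_cross_r (a b : pt) : dot b (cross a b) = 0.
Proof. rewrite /cross /dot !vec3E0 !vec3E1 !vec3E2; ring. Qed.

Lemma sqnorm_cross_unit (a b : pt) : sqnorm a = 1 -> sqnorm b = 1 -> dot a b = 0 ->
  sqnorm (cross a b) = 1.
Proof.
move=> ha hb hab.
have -> : sqnorm (cross a b) = sqnorm a * sqnorm b - dot a b ^+ 2.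
  rewrite /cross /sqnorm /dot !vec3E0 !vec3E1 !vec3E2; ring.
rewrite ha hb hab; ring.
Qed.

Lemma sqnorm_frame (a b : pt) y : sqnorm a = 1 -> sqnorm b = 1 -> dot a b = 0 ->
  sqnorm y = dot y a ^+ 2 + dot y b ^+ 2 + dot y (cross a b) ^+ 2.
Proof.
move=> ha hb hab.
have gram : dot y (cross a b) ^+ 2 =
    sqnorm y * (sqnorm a * sqnorm b - dot a b ^+ 2)
    - dot y a * (dot y a * sqnorm b - dot a b * dot y b)
    + dot y b * (dot y a * dot a b - sqnorm a * dot y b).
  rewrite /cross /sqnorm /dot !vec3E0 !vec3E1 !vec3E2; ring.
rewrite gram ha hb hab; ring.
Qed.

Definition dir (c v : pt) : pt := (enorm (v - c))^-1 *: (v - c).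

Lemma sqnorm_dir c v : 0 < enorm (v - c) -> sqnorm (dir c v) = 1.
Proof.
move=> h; rewrite /dir /sqnorm dotZl dotC dotZl -/(sqnorm _) -enorm_sqr.
by field; rewrite gt_eqF.
Qed.

Lemma dir_scale c v : 0 < enorm (v - c) -> v - c = enorm (v - c) *: dir c v.
Proof. by move=> h; rewrite /dir scalerA divff ?scale1r // gt_eqF. Qed.

Definition grid_index (N : nat) (t : R) : 'I_(N.*2).+1 :=
  inord (Num.truncn (N%:R * (t + 1))).

Lemma grid_index_bounds N (t : R) : -1 <= t <= 1 ->
  (val (grid_index N t))%:R <= N%:R * (t + 1) < (val (grid_index N t)).+1%:R.
Proof.
move=> /andP[t0 t1].
have Nt : 0 <= (N%:R : R) * (t + 1) by rewrite mulr_ge0 ?ler0n //; lra.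
have /andP[lo hi] := truncn_itv Nt.
suff -> : val (grid_index N t) = Num.truncn (N%:R * (t + 1)) by rewrite lo hi.
rewrite /grid_index /= inordK // ltnS -(ler_nat R) -mul2n natrM.
by apply: le_trans lo _; have := ler0n R N; rewrite [2%:R]/=; nra.
Qed.

Lemma grid_index_close N (t t' : R) : -1 <= t <= 1 -> -1 <= t' <= 1 ->
  grid_index N t = grid_index N t' -> (N%:R * t - N%:R * t') ^+ 2 < 1.
Proof.
move=> t1 t'1 e.
have := grid_index_bounds N t1; have := grid_index_bounds N t'1; rewrite e.
rewrite -!natr1 => /andP[a1 a2] /andP[b1 b2].
have lo : -1 < N%:R * t - N%:R * t' by lra.
have hi : N%:R * t - N%:R * t' < 1 by lra.
nra.
Qed.

Definition grid_cell N x : 'I_(N.*2).+1 * 'I_(N.*2).+1 * 'I_(N.*2).+1 :=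
  (grid_index N (x ord0 i0), grid_index N (x ord0 i1), grid_index N (x ord0 i2)).

Lemma grid_cell_close N x y : sqnorm x = 1 -> sqnorm y = 1 ->
  grid_cell N x = grid_cell N y -> N%:R ^+ 2 * sqnorm (x - y) < 3.
Proof.
move=> x1 y1 [e0 e1 e2].
have h0 := grid_index_close (coord_unit_bound i0 x1) (coord_unit_bound i0 y1) e0.
have h1 := grid_index_close (coord_unit_bound i1 x1) (coord_unit_bound i1 y1) e1.
have h2 := grid_index_close (coord_unit_bound i2 x1) (coord_unit_bound i2 y1) e2.
have -> : N%:R ^+ 2 * sqnorm (x - y) =
    (N%:R * x ord0 i0 - N%:R * y ord0 i0) ^+ 2 + (N%:R * x ord0 i1 - N%:R * y ord0 i1) ^+ 2 +
    (N%:R * x ord0 i2 - N%:R * y ord0 i2) ^+ 2.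
  by rewrite /sqnorm /dot !mxE; ring.
lra.
Qed.

(* Points of [P] sharing a grid cell of mesh [1/N] must coincide once [3 < N^2 eta]. *)
Lemma separated_unit_image_finite (eta : R) (P : set pt) (f : pt -> pt) : 0 < eta ->
  (forall x, P x -> sqnorm (f x) = 1) ->
  (forall x y, P x -> P y -> x <> y -> eta <= sqnorm (f x - f y)) ->
  exists s : seq pt, forall x, P x -> x \in s.
Proof.
move=> eta_gt0 f1 sep.
set N := (Num.truncn (3 / eta)).+1.
have N_large : 3 < N%:R ^+ 2 * eta.
  have /andP[_ hi] := truncn_itv (divr_ge0 (ler0n R 3) (ltW eta_gt0)).
  have N1 : 1 <= (N%:R : R) by rewrite ler1n.
  have : 3 < N%:R * eta by rewrite -ltr_pdivrMr.
  nra.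
pose in_cell k := [set x | P x /\ grid_cell N (f x) = k].
pose rep k := xget 0 (in_cell k).
exists (map rep (enum [set: 'I_(N.*2).+1 * 'I_(N.*2).+1 * 'I_(N.*2).+1])) => x Px.
have [Py ey] : in_cell (grid_cell N (f x)) (rep (grid_cell N (f x))).
  by apply: xgetPex; exists x.
have -> : x = rep (grid_cell N (f x)).
  apply/eqP; apply: contraLR N_large => /eqP xy; rewrite -leNgt.
  apply: le_trans (ltW (grid_cell_close (f1 _ Px) (f1 _ Py) (esym ey))).
  by apply: ler_wpM2l; [exact: sqr_ge0 | exact: sep].
by apply: map_f; rewrite mem_enum in_setT.
Qed.

Lemma enorm_lt_box y x (e : R) : (forall i, `|y ord0 i - x ord0 i| < e) -> enorm (y - x) < 3 * e.
Proof.
move=> box; apply: le_lt_trans (enorm_le_sum_abs _) _; rewrite !mxE.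
by have := box i0; have := box i1; have := box i2; lra.
Qed.

Lemma interior_box (S : set pt) x :
  interior S x <-> exists2 e : R, 0 < e & forall y, (forall i, `|y ord0 i - x ord0 i| < e) -> S y.
Proof.
split => [/nbhs_ballP [e e_gt0 eS]|[e e_gt0 eS]].
  exists e => // y box; apply: eS; split => // i j.
  by rewrite (ord1 i) /ball /= distrC; apply: box.
apply/nbhs_ballP; exists e => // y [_ yx]; apply: eS => i.
by have := yx ord0 i; rewrite /ball /= distrC.
Qed.

Lemma closure_enorm_approx (S : set pt) x : closure S x ->
  forall e : R, 0 < e -> exists2 y, S y & enorm (y - x) < e.
Proof.
move=> Sx e e_gt0; have e3_gt0 : 0 < e / 3 by rewrite divr_gt0.
have [y [Sy [_ yx]]] : S `&` ball x (e / 3) !=set0.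
  by apply: Sx; apply/nbhs_ballP; exists (e / 3).
have -> : e = 3 * (e / 3) by field.
by exists y => //; apply: enorm_lt_box => i; have := yx ord0 i; rewrite /ball /= distrC.
Qed.

Lemma open_ball_interior (S : set pt) c (r : R) x : eball c r `<=` S ->
  enorm (x - c) < r -> interior S x.
Proof.
move=> BS xr; apply/interior_box.
exists ((r - enorm (x - c)) / 3); first by rewrite divr_gt0 // subr_gt0.
move=> y box; apply: BS; rewrite /eball /=.
have := enorm_lt_box box; have := ler_enormB y x c.
have -> : 3 * ((r - enorm (x - c)) / 3) = r - enorm (x - c) by field.
lra.
Qed.

Lemma interior_halfspace_lt (S : set pt) n (h : R) z : 0 < enorm n ->
  (forall x, S x -> dot x n <= h) -> interior S z -> dot z n < h.
Proof.
move=> n_gt0 S_le /interior_box [e e_gt0 box].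
set t := e / (2 * enorm n).
have t_gt0 : 0 < t by rewrite divr_gt0 ?mulr_gt0.
have tn : t * enorm n = e / 2 by rewrite /t; field; rewrite gt_eqF.
have zt : S (z + t *: n).
  apply: box => i; rewrite !mxE addrAC subrr add0r normrM gtr0_norm //.
  by apply: le_lt_trans (ler_wpM2l (ltW t_gt0) (coord_le_enorm n i)) _; rewrite tn; lra.
have := S_le _ zt.
have -> : dot (z + t *: n) n = dot z n + t * enorm n ^+ 2.
  by rewrite enorm_sqr /sqnorm /dot !mxE; ring.
by have := mulr_gt0 t_gt0 (exprn_gt0 2 n_gt0); lra.
Qed.

Lemma exists_argmax_seq (f : pt -> R) (P : pt -> Prop) (s : seq pt) :
  (exists2 v, P v & v \in s) -> exists2 m, P m & forall w, P w -> w \in s -> f w <= f m.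
Proof.
elim: s => [[v _]//|x s IH] ex.
have [[v Pv vs]|none] := pselect (exists2 v, P v & v \in s); last first.
  have [v Pv] := ex; rewrite in_cons => /orP[/eqP vx|vs]; last by case: none; exists v.
  exists x; first by rewrite -vx.
  by move=> w Pw; rewrite in_cons => /orP[/eqP->//|ws]; case: none; exists w.
have [m Pm m_max] := IH (ex_intro2 _ _ v Pv vs).
have [Px|nPx] := pselect (P x); last first.
  exists m => // w Pw; rewrite in_cons => /orP[/eqP wx|]; [by rewrite wx in Pw|exact: m_max].
have [fx|fx] := leP (f x) (f m).
  by exists m => // w Pw; rewrite in_cons => /orP[/eqP->//|]; apply: m_max.
exists x => // w Pw; rewrite in_cons => /orP[/eqP->//|ws].
by apply: le_trans (m_max _ Pw ws) _; apply: ltW.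
Qed.

Lemma exists_index_approximating (Q : pt -> pt -> Prop) (p : pt) (s : seq pt) :
  (forall e : R, 0 < e -> exists2 y, enorm (y - p) < e & exists2 v, v \in s & Q v y) ->
  exists2 v, v \in s & forall e : R, 0 < e -> exists2 y, enorm (y - p) < e & Q v y.
Proof.
elim: s => [|x s IH] approx; first by have [y _ [v]] := approx 1 ltr01.
have [[e1 e1_gt0 farQ]|near] :=
  pselect (exists2 e1 : R, 0 < e1 & forall y, enorm (y - p) < e1 -> ~ Q x y); last first.
  exists x; first by rewrite mem_head.
  move=> e e_gt0; apply: contra_notP near => none; exists e => // y yp Qy.
  by apply: none; exists y.
have [v vs Qv] : exists2 v, v \in s & forall e : R, 0 < e -> exists2 y, enorm (y - p) < e & Q v y.
  apply: IH => e e_gt0.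
  have m_gt0 : 0 < Num.min e e1 by rewrite lt_min e_gt0 e1_gt0.
  have [y] := approx _ m_gt0; rewrite lt_min => /andP[ye ye1] [v].
  rewrite in_cons => /orP[/eqP->|vs] Qy; first by case: (farQ y ye1).
  by exists y => //; exists v.
by exists v => //; rewrite in_cons vs orbT.
Qed.

End Geometry.

Section SegmentToFarthestVertex.
Variable F : realFieldType.
Implicit Types a x h t s : F.

Lemma axial_le a x h : 0 <= a -> 0 <= h -> x ^+ 2 + h <= a ^+ 2 -> x <= a.
Proof.
move=> a0 h0 xha; rewrite leNgt; apply/negP => ax.
by have := ltrXn2r 2 a0 ax; rewrite /=; lra.
Qed.

(* Take coordinates along the direction of a farthest vertex, at distance [a], and let a
   vertex have axial coordinate [x] and squared distance [h] to the axis.  The point of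
   parameter [t] on the segment joining the two vertices has squared norm
   [((1 - t) a + t x)^2 + t^2 h], and some such point lies in the ball. *)
Lemma segment_axial_lower_bound a x h t : 0 <= a -> 0 <= x -> 0 <= h ->
  x ^+ 2 + h <= a ^+ 2 -> 0 <= t <= 1 ->
  x ^+ 2 + (1 - t) ^+ 2 * h <= ((1 - t) * a + t * x) ^+ 2.
Proof.
move=> a0 x0 h0 xha /andP[t0 t1]; have xa := axial_le a0 h0 xha.
have : (1 - t) ^+ 2 * (x ^+ 2 + h) <= (1 - t) ^+ 2 * a ^+ 2 by rewrite ler_wpM2l ?sqr_ge0.
have : 2 * t * (1 - t) * x ^+ 2 <= 2 * t * (1 - t) * (a * x).
  by apply: ler_wpM2l; [rewrite !mulr_ge0 //; lra | nra].
nra.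
Qed.

Lemma segment_axial_bound a x h t s : 0 <= a -> 0 <= x -> 0 <= h ->
  x ^+ 2 + h <= a ^+ 2 -> 0 <= t <= 1 ->
  ((1 - t) * a + t * x) ^+ 2 + t ^+ 2 * h <= s -> x ^+ 2 + h / 2 <= s.
Proof.
move=> a0 x0 h0 xha t01 le_s; have := segment_axial_lower_bound a0 x0 h0 xha t01.
have : 0 <= (2 * t - 1) ^+ 2 * h by rewrite mulr_ge0 ?sqr_ge0.
nra.
Qed.

Lemma segment_axial_bound_eq a x h t s : 0 <= a -> 0 <= x -> 0 < h ->
  x ^+ 2 + h <= a ^+ 2 -> 0 <= t <= 1 ->
  ((1 - t) * a + t * x) ^+ 2 + t ^+ 2 * h <= s -> s <= x ^+ 2 + h / 2 ->
  [/\ x = 0, h = a ^+ 2 & h = 2 * s].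
Proof.
move=> a0 x0 h0 xha t01 le_s ge_s.
have low := segment_axial_lower_bound a0 x0 (ltW h0) xha t01.
have t_half : t = 1 / 2.
  have : (2 * t - 1) ^+ 2 * h <= 0 by nra.
  rewrite pmulr_lle0 // => sq0.
  have /eqP : (2 * t - 1) ^+ 2 = 0 by apply: le_anti; rewrite sq0 sqr_ge0.
  by rewrite sqrf_eq0 => /eqP; lra.
rewrite t_half in le_s low.
have xa := axial_le a0 (ltW h0) xha.
have x_0 : x = 0.
  have : x * (a - x) <= 0 by nra.
  have [x_le0|x_gt0] := leP x 0; first lra.
  rewrite pmulr_rle0 // subr_le0 => ax.
  have xa' : x = a by lra.
  by move: xha h0; rewrite xa'; lra.
rewrite x_0 in le_s low xha ge_s; split => //; nra.
Qed.

End SegmentToFarthestVertex.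

Section CapBody.
Variable R : realType.
Notation pt := 'rV[R]_3.
Implicit Types x y z v w : pt.

Lemma subset_conv_hull (S : set pt) : S `<=` conv_hull S.
Proof.
move=> x Sx; exists 1%N, (fun=> 1), (fun=> x).
by rewrite !big_ord1 scale1r.
Qed.

Lemma conv_hullN (S : set pt) x : (forall y, S y -> S (- y)) ->
  conv_hull S x -> conv_hull S (- x).
Proof.
move=> SN [n [w [p [w_ge0 [w1 [Sp ->]]]]]].
exists n, w, (fun i => - p i); do 3!split => //; first by move=> i; apply: SN.
by rewrite -sumrN; apply: eq_bigr => i _; rewrite scalerN.
Qed.

Variables (c : pt) (r : R) (V : set pt).
Hypothesis r_gt0 : 0 < r.
Hypothesis V_out : V `&` eball c r = set0.
Hypothesis V_segments :
  forall v w, V v -> V w -> v <> w -> segment v w `&` eball c r !=set0.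
Local Notation K := (conv_hull (eball c r `|` V)).

Lemma vertex_outside v : V v -> ~ eball c r v.
Proof. by move=> Vv Bv; have : (V `&` eball c r) v by []; rewrite V_out. Qed.

Lemma vertex_far v : V v -> r < enorm (v - c).
Proof. by move=> /vertex_outside; rewrite /eball /=; case: leP. Qed.

Lemma eball_center : eball c r c.
Proof. by rewrite /eball /= subrr enorm0 ltW. Qed.

Lemma enorm_convex_comb (a : R) y z : 0 <= a <= 1 ->
  enorm (a *: y + (1 - a) *: z - c) <= a * enorm (y - c) + (1 - a) * enorm (z - c).
Proof.
move=> /andP[a0 a1].
have -> : a *: y + (1 - a) *: z - c = a *: (y - c) + (1 - a) *: (z - c).
  by apply/rowP => i; rewrite !mxE; ring.
apply: le_trans (ler_enormD _ _) _.
by rewrite !enormZ !ger0_norm //; lra.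
Qed.

Lemma enorm_cap_le (a : R) v b : 0 <= a <= 1 -> eball c r b ->
  enorm (a *: v + (1 - a) *: b - c) <= a * enorm (v - c) + (1 - a) * r.
Proof.
move=> a01 Bb; apply: le_trans (enorm_convex_comb v b a01) _.
move: a01 => /andP[a0 a1].
have : (1 - a) * enorm (b - c) <= (1 - a) * r by apply: ler_wpM2l => //; lra.
lra.
Qed.

Lemma eball_convex (a : R) y z : 0 <= a <= 1 -> eball c r y -> eball c r z ->
  eball c r (a *: y + (1 - a) *: z).
Proof.
move=> a01 By Bz; rewrite /eball /=; apply: le_trans (enorm_convex_comb y z a01) _.
move: a01 => /andP[a0 a1]; rewrite /eball /= in By Bz.
have : a * enorm (y - c) <= a * r by apply: ler_wpM2l.
have : (1 - a) * enorm (z - c) <= (1 - a) * r by apply: ler_wpM2l => //; lra.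
lra.
Qed.

Lemma conic_comb_eball (al be : R) y z : 0 <= al -> 0 <= be ->
  eball c r y -> eball c r z -> exists2 b, eball c r b & al *: y + be *: z = (al + be) *: b.
Proof.
move=> al0 be0 By Bz; have [s0|s0] := eqVneq (al + be) 0.
  have al00 : al = 0 by lra.
  have be00 : be = 0 by lra.
  by exists y => //; rewrite al00 be00 addr0 !scale0r addr0.
exists ((al / (al + be)) *: y + (1 - al / (al + be)) *: z).
  by apply: eball_convex => //; rewrite divr_ge0 ?addr_ge0 //= ler_pdivrMr; lra.
by apply/rowP => i; rewrite !mxE; field.
Qed.

Definition cap v : set pt :=
  [set x | exists a b, 0 <= a <= 1 /\ eball c r b /\ x = a *: v + (1 - a) *: b].

(* As the segment [v, w] meets the ball, a conic combination of [v] and [w] is one of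
   a single vertex and a ball point. *)
Lemma conic_comb_vertex_pair (al be : R) v w : 0 <= al -> 0 <= be ->
  (al = 0 \/ V v) -> V w -> exists a u b, 0 <= a <= al + be /\ V u /\ eball c r b /\
    al *: v + be *: w = a *: u + (al + be - a) *: b.
Proof.
move=> al0 be0 Vv Vw.
have single u : V u -> al *: v + be *: w = (al + be) *: u ->
    exists a' u' b, 0 <= a' <= al + be /\ V u' /\ eball c r b /\
      al *: v + be *: w = a' *: u' + (al + be - a') *: b.
  move=> Vu E; exists (al + be), u, c; rewrite subrr scale0r addr0 lexx addr_ge0 //.
  by split => //; split => //; split; [exact: eball_center|].
have [al00|alnz] := eqVneq al 0; first by apply: (single w); rewrite // al00 scale0r !add0r.
have {}Vv : V v by case: Vv => // /eqP; rewrite (negPf alnz).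
have [be00|benz] := eqVneq be 0; first by apply: (single v); rewrite // be00 scale0r !addr0.
have [vw|vw] := eqVneq v w; first by apply: (single v); rewrite // -vw scalerDl.
have [q [[s [/andP[s0 s1] ->]] Bq]] := V_segments Vv Vw (elimN eqP vw).
have al_gt0 : 0 < al by rewrite lt_neqAle eq_sym alnz.
have be_gt0 : 0 < be by rewrite lt_neqAle eq_sym benz.
have [hs|hs] := leP be (s * (al + be)).
  have s_gt0 : 0 < s by nra.
  exists (al + be - be / s), v, ((1 - s) *: v + s *: w); split; last first.
    by split => //; split => //; apply/rowP => i; rewrite !mxE; field; lra.
  have : 0 <= be / s by apply: divr_ge0; lra.
  by rewrite subr_ge0 ler_pdivrMr //; lra.
have s_lt1 : s < 1 by nra.
exists (al + be - al / (1 - s)), w, ((1 - s) *: v + s *: w); split; last first.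
  by split => //; split => //; apply/rowP => i; rewrite !mxE; field; lra.
have : 0 <= al / (1 - s) by apply: divr_ge0; lra.
by rewrite subr_ge0 ler_pdivrMr; lra.
Qed.

Lemma conic_comb_cap_form n (wt : 'I_n -> R) (p : 'I_n -> pt) :
  (forall i, 0 <= wt i) -> (forall i, (eball c r `|` V) (p i)) ->
  exists a v b, 0 <= a <= \sum_(i < n) wt i /\ (a = 0 \/ V v) /\ eball c r b /\
    \sum_(i < n) wt i *: p i = a *: v + (\sum_(i < n) wt i - a) *: b.
Proof.
elim: n wt p => [|n IH] wt p wt_ge0 p_in.
  exists 0, c, c; rewrite !big_ord0 subrr !scale0r addr0 lexx.
  by split => //; split; [left|split; [exact: eball_center|]].
have [a [v [b [/andP[a0 a1] [Vv [Bb E]]]]]] :=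
  IH (fun i => wt (widen_ord (leqnSn n) i)) (fun i => p (widen_ord (leqnSn n) i))
     (fun i => wt_ge0 _) (fun i => p_in _).
rewrite !big_ord_recr /= E.
set s := \sum_(i < n) wt (widen_ord (leqnSn n) i) in a1 E *.
have wn0 := wt_ge0 ord_max.
have s_a : 0 <= s - a by lra.
case: (p_in ord_max) => [Bp|Vp].
  have [b' Bb' E'] := conic_comb_eball s_a wn0 Bb Bp.
  exists a, v, b'; split; first by apply/andP; split; lra.
  split => //; split => //.
  by rewrite -addrA E'; congr (_ + _); congr (_ *: _); ring.
have [a' [u [q [/andP[a'0 a'1] [Vu [Bq E2]]]]]] := conic_comb_vertex_pair a0 wn0 Vv Vp.
have a'_s : 0 <= a + wt ord_max - a' by lra.
have [b' Bb' E3] := conic_comb_eball s_a a'_s Bb Bq.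
exists a', u, b'; split; first by apply/andP; split; lra.
split; first by right. split => //.
rewrite addrAC E2 -addrA [X in _ + X = _]addrC E3.
by congr (_ + _); congr (_ *: _); ring.
Qed.

Lemma cap_body_cover x : K x -> eball c r x \/ exists2 v, V v & cap v x.
Proof.
move=> [n [wt [p [wt_ge0 [wt1 [p_in ->]]]]]].
have [a [v [b [a01 [[a0|Vv] [Bb ->]]]]]] := conic_comb_cap_form wt_ge0 p_in.
  by left; rewrite wt1 a0 scale0r add0r subr0 scale1r.
by right; exists v => //; exists a, b; rewrite -wt1.
Qed.

Lemma cap_body_halfspace n (h : R) x : r * enorm n <= h ->
  (forall w, V w -> dot (w - c) n <= h) -> K x -> dot (x - c) n <= h.
Proof.
move=> rh V_le Kx.
have ball_le y : eball c r y -> dot (y - c) n <= h.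
  move=> By; apply: le_trans (dot_le_enorm _ _) (le_trans _ rh).
  by apply: ler_wpM2r => //; apply: enorm_ge0.
case: (cap_body_cover Kx) => [|[v Vv [a [b [/andP[a0 a1] [Bb ->]]]]]]; first exact: ball_le.
have -> : dot (a *: v + (1 - a) *: b - c) n = a * dot (v - c) n + (1 - a) * dot (b - c) n.
  by rewrite /dot !mxE; ring.
have : a * dot (v - c) n <= a * h by apply: ler_wpM2l => //; apply: V_le.
have : (1 - a) * dot (b - c) n <= (1 - a) * h by apply: ler_wpM2l; [lra|apply: ball_le].
lra.
Qed.

Lemma tangent_halfspace_vertex_unique n v w : sqnorm n = 1 -> V v -> V w ->
  r <= dot (v - c) n -> r < dot (w - c) n -> v = w.
Proof.
move=> n1 Vv Vw vr wr; apply: contra_notP (vertex_outside Vv) => vw.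
have [q [[t [/andP[t0 t1] Eq]] Bq]] := V_segments Vv Vw vw.
have : dot (q - c) n <= r.
  by apply: le_trans (dot_le_enorm _ _) _; rewrite (enorm_unit n1) mulr1.
have -> : dot (q - c) n = (1 - t) * dot (v - c) n + t * dot (w - c) n.
  by rewrite Eq /dot !mxE; ring.
have [t00|t_gt0] := eqVneq t 0.
  by move=> _; move: Bq; rewrite Eq t00 subr0 scale1r scale0r addr0.
have : 0 < t by rewrite lt_neqAle eq_sym t_gt0.
nra.
Qed.

Lemma exists_tangent_through (A d : pt) : r < enorm A -> 0 < dot A d ->
  exists n, sqnorm n = 1 /\ dot A n = r /\ 0 < dot n d.
Proof.
move=> rA Ad.
have [e [e1 [Ae ed]]] := exists_unit_orthogonal A d.
have A2 := enorm_sqr A; have A0 := enorm_ge0 A.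
set nA := sqnorm A in A2.
have nA_gt : r ^+ 2 < nA by rewrite -A2 (ltrXn2r 2 (ltW r_gt0) rA).
set k := r / nA.
have nA_gt0 : 0 < nA := le_lt_trans (sqr_ge0 r) nA_gt.
have k_gt0 : 0 < k by rewrite divr_gt0.
have b2_ge0 : 0 <= 1 - r ^+ 2 / nA by rewrite subr_ge0 ler_pdivrMr; lra.
set b := Num.sqrt (1 - r ^+ 2 / nA).
have b2 : b ^+ 2 = 1 - r ^+ 2 / nA by rewrite sqr_sqrtr.
have b0 : 0 <= b by apply: sqrtr_ge0.
exists (k *: A + b *: e); split; last split.
- have -> : sqnorm (k *: A + b *: e) =
      k ^+ 2 * sqnorm A + 2 * k * b * dot A e + b ^+ 2 * sqnorm e.
    by rewrite /sqnorm /dot !mxE; ring.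
  by rewrite Ae e1 b2 -/nA /k; field; lra.
- have -> : dot A (k *: A + b *: e) = k * sqnorm A + b * dot A e.
    by rewrite /sqnorm /dot !mxE; ring.
  by rewrite Ae -/nA /k; field; lra.
- have -> : dot (k *: A + b *: e) d = k * dot A d + b * dot e d by rewrite /dot !mxE; ring.
  by have := mulr_ge0 b0 ed; nra.
Qed.

Lemma exists_tangent_halfspace d : 0 < sqnorm d ->
  exists n, sqnorm n = 1 /\ 0 < dot n d /\ forall w, V w -> dot (w - c) n <= r.
Proof.
move=> d_gt0.
have d2 := enorm_sqr d; have := enorm_ge0 d => d0.
have ed_gt0 : 0 < enorm d by nra.
have [[v [Vv vd]]|none] := pselect (exists v, V v /\ r * enorm d < dot (v - c) d).
  have rv : r < enorm (v - c).
    by rewrite -(ltr_pM2r ed_gt0); apply: lt_le_trans vd (dot_le_enorm _ _).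
  have [n [n1 [vn nd]]] := exists_tangent_through rv (lt_trans (mulr_gt0 r_gt0 ed_gt0) vd).
  exists n; split => //; split => // w Vw.
  have [//|wn] := leP (dot (w - c) n) r.
  have vr : r <= dot (v - c) n by rewrite vn.
  have vw := tangent_halfspace_vertex_unique n1 Vv Vw vr wn.
  by move: wn; rewrite -vw vn ltxx.
exists ((enorm d)^-1 *: d); split; last split.
- by rewrite /sqnorm dotZl dotC dotZl -/(sqnorm d) -d2; field; lra.
- by rewrite dotZl -/(sqnorm d) mulr_gt0 ?invr_gt0.
- move=> w Vw; rewrite dotC dotZl dotC mulrC ler_pdivrMr //.
  by have [//|h] := leP (dot (w - c) d) (r * enorm d); case: none; exists w.
Qed.

Lemma symmetry_center_eq o : (forall x, K x -> K (2%:R *: o - x)) -> o = c.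
Proof.
move=> Ksym; set d := 2%:R *: o - c - c.
have [d_le0|d_gt0] := leP (sqnorm d) 0.
  have /sqnorm_eq0/rowP d0 : sqnorm d = 0 by apply: le_anti; rewrite d_le0 sqnorm_ge0.
  by apply/rowP => i; have := d0 i; rewrite /d !mxE; lra.
exfalso.
have [n [n1 [nd V_le]]] := exists_tangent_halfspace d_gt0.
have Kp : K (c - r *: n).
  apply: subset_conv_hull; left; rewrite /eball /=.
  have -> : c - r *: n - c = - (r *: n) by apply/rowP => i; rewrite !mxE; ring.
  by rewrite enormN enormZ (enorm_unit n1) mulr1 ger0_norm ?(ltW r_gt0).
have rn : r * enorm n <= r by rewrite (enorm_unit n1) mulr1.
have := cap_body_halfspace rn V_le (Ksym _ Kp).
have -> : dot (2%:R *: o - (c - r *: n) - c) n = dot n d + r * sqnorm n.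
  by rewrite /d /sqnorm /dot !mxE; ring.
rewrite n1; lra.
Qed.

Lemma far_vertex_directions_separated rho v w : r <= rho -> V v -> V w -> v <> w ->
  rho <= enorm (v - c) -> rho <= enorm (w - c) ->
  2 * (1 - r / rho) <= sqnorm (dir c v - dir c w).
Proof.
move=> r_rho Vv Vw vw rv rw; have r0 := r_gt0.
have v_gt0 : 0 < enorm (v - c) by lra.
have w_gt0 : 0 < enorm (w - c) by lra.
have dw_w : dot (w - c) (dir c w) = enorm (w - c).
  by rewrite {1}(dir_scale w_gt0) dotZl -/(sqnorm _) sqnorm_dir // mulr1.
have v_le : dot (v - c) (dir c w) <= r.
  have [//|lt] := leP (dot (v - c) (dir c w)) r.
  have wr : r <= dot (w - c) (dir c w) by lra.
  by case: vw; rewrite (tangent_halfspace_vertex_unique (sqnorm_dir w_gt0) Vw Vv wr lt).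
rewrite (dir_scale v_gt0) dotZl in v_le.
have -> : sqnorm (dir c v - dir c w) =
    sqnorm (dir c v) + sqnorm (dir c w) - 2 * dot (dir c v) (dir c w).
  by rewrite /sqnorm /dot !mxE; ring.
rewrite !sqnorm_dir //.
have : dot (dir c v) (dir c w) <= r / enorm (v - c) by rewrite ler_pdivlMr // mulrC.
have : r / enorm (v - c) <= r / rho.
  by rewrite ler_pdivrMr // mulrAC ler_pdivlMr; [apply: ler_wpM2l; lra | lra].
lra.
Qed.

Lemma far_vertices_finite rho : r < rho ->
  exists s : seq pt, forall v, V v -> rho <= enorm (v - c) -> v \in s.
Proof.
move=> r_rho; have r0 := r_gt0.
have [s sP] : exists s : seq pt, forall v, (V v /\ rho <= enorm (v - c)) -> v \in s.
  apply: (@separated_unit_image_finite _ (2 * (1 - r / rho)) _ (dir c)).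
  - have : r / rho < 1 by rewrite ltr_pdivrMr; lra.
    lra.
  - by move=> v [_ rv]; apply: sqnorm_dir; lra.
  - move=> v w [Vv rv] [Vw rw] vw.
    exact: far_vertex_directions_separated (ltW r_rho) Vv Vw vw rv rw.
by exists s => v Vv rv; apply: sP.
Qed.

Lemma exists_farthest_vertex v0 : V v0 ->
  exists2 v1, V v1 & forall w, V w -> enorm (w - c) <= enorm (v1 - c).
Proof.
move=> Vv0; set rho := enorm (v0 - c).
have [s sP] := far_vertices_finite (vertex_far Vv0).
have [v1 [Vv1 rv1] v1_max] := exists_argmax_seq (fun v => enorm (v - c))
  (ex_intro2 (fun v => V v /\ rho <= enorm (v - c)) _ v0 (conj Vv0 (lexx _)) (sP _ Vv0 (lexx _))).
exists v1 => // w Vw; have [rw|wr] := leP rho (enorm (w - c)).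
  by apply: v1_max; [split|apply: sP].
exact: le_trans (ltW wr) rv1.
Qed.

Hypothesis K_sym : forall x, K x -> K (2%:R *: c - x).

(* The reflection of a farthest vertex is a farthest point of [K] and so cannot lie
   strictly inside a cap. *)
Lemma farthest_vertex_antipode (a : R) w : (forall u, V u -> enorm (u - c) <= a) ->
  V w -> enorm (w - c) = a -> V (2%:R *: c - w).
Proof.
move=> V_le Vw wa.
have ra : r < a by rewrite -wa vertex_far.
have w'a : enorm (2%:R *: c - w - c) = a.
  rewrite -wa -enormN; congr enorm; apply/rowP => i; rewrite !mxE; ring.
have [Bw'|[v Vv [al [b [al01 [Bb E]]]]]] :=
  cap_body_cover (K_sym (subset_conv_hull (or_intror Vw))).
  by move: Bw'; rewrite /eball /= w'a; lra.
have := enorm_cap_le v al01 Bb; rewrite -E w'a.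
have := V_le _ Vv; move: al01 => /andP[al0 al1] va h.
have al_1 : al = 1.
  have : al * enorm (v - c) <= al * a by apply: ler_wpM2l.
  have : (1 - al) * (a - r) <= 0 by nra.
  nra.
by rewrite E al_1 scale1r subrr scale0r addr0.
Qed.

Lemma reflect_sub x : 2%:R *: c - x - c = - (x - c).
Proof. by apply/rowP => i; rewrite !mxE; ring. Qed.

Lemma vertex_segment_frame_bound (e1 e2 : pt) z w :
  sqnorm e1 = 1 -> sqnorm e2 = 1 -> dot e1 e2 = 0 -> V z -> V w -> z <> w ->
  exists2 t : R, 0 <= t <= 1 &
    ((1 - t) * dot (z - c) e1 + t * dot (w - c) e1) ^+ 2 +
    ((1 - t) * dot (z - c) e2 + t * dot (w - c) e2) ^+ 2 +
    ((1 - t) * dot (z - c) (cross e1 e2) + t * dot (w - c) (cross e1 e2)) ^+ 2 <= r ^+ 2.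
Proof.
move=> e1u e2u e12 Vz Vw zw.
have [q [[t [t01 ->]] Bq]] := V_segments Vz Vw zw.
exists t => //; move: Bq; rewrite /eball /= enorm_le_sqr ?(ltW r_gt0) // (sqnorm_frame _ e1u e2u e12).
have seg e : dot ((1 - t) *: z + t *: w - c) e = (1 - t) * dot (z - c) e + t * dot (w - c) e.
  by rewrite /dot !mxE; ring.
by rewrite !seg.
Qed.

Definition cylinders_cover (E : seq pt) :=
  forall w, V w -> exists2 e, e \in E & sqnorm (w - c) - dot (w - c) e ^+ 2 < r ^+ 2.

(* The only vertices that can escape the three cylinders around [e1], [e2] and
   [e1 x e2]: farthest vertices orthogonal to [e1], on a diagonal of the [e2, e1 x e2]
   plane. *)
Definition diagonal_vertex_free (a : R) (e1 e2 : pt) :=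
  forall w, V w -> dot (w - c) e1 = 0 -> sqnorm (w - c) = 2 * r ^+ 2 ->
    enorm (w - c) = a -> dot (w - c) e2 ^+ 2 = r ^+ 2 -> False.

Lemma no_diagonal_vertex_beside (k : R) (e1 e2 : pt) w0 u :
  sqnorm e1 = 1 -> sqnorm e2 = 1 -> dot e1 e2 = 0 -> V w0 -> w0 - c = k *: e2 -> r < k ->
  V u -> dot (u - c) e1 = 0 -> 0 < dot (u - c) e2 ->
  dot (u - c) e2 ^+ 2 = r ^+ 2 -> dot (u - c) (cross e1 e2) ^+ 2 = r ^+ 2 -> False.
Proof.
move=> e1u e2u e12 Vw0 w0k rk Vu u1 u2_gt0 u2 u3; have r0 := r_gt0.
have {}u2 : dot (u - c) e2 = r.
  by apply/eqP; rewrite -(eqrXn2 (ltn0Sn 1)) ?(ltW u2_gt0) ?(ltW r0) // u2.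
have w0_1 : dot (w0 - c) e1 = 0 by rewrite w0k dotZl dotC e12 mulr0.
have w0_2 : dot (w0 - c) e2 = k by rewrite w0k dotZl -/(sqnorm e2) e2u mulr1.
have w0_3 : dot (w0 - c) (cross e1 e2) = 0 by rewrite w0k dotZl dot_cross_r mulr0.
have w0u : w0 <> u by move=> w0u; move: u3; rewrite -w0u w0_3; nra.
have [t /andP[t0 t1]] := vertex_segment_frame_bound e1u e2u e12 Vw0 Vu w0u.
rewrite w0_1 u1 w0_2 u2 w0_3 !mulr0 !add0r exprMn u3.
have : r <= (1 - t) * k + t * r by nra.
have [->|t_neq0] := eqVneq t 0; last first.
  have : 0 < t ^+ 2 * r ^+ 2 by rewrite mulr_gt0 ?exprn_gt0 // lt_neqAle eq_sym t_neq0.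
  nra.
rewrite subr0 mul1r mul0r addr0 expr0n /= mul0r addr0 => _.
by have := ltrXn2r 2 (ltW r0) rk; rewrite /=; lra.
Qed.

Lemma exists_diagonal_free_axis (a : R) (e1 : pt) : sqnorm e1 = 1 ->
  (forall u, V u -> enorm (u - c) = a -> V (2%:R *: c - u)) ->
  exists e2, [/\ sqnorm e2 = 1, dot e1 e2 = 0 & diagonal_vertex_free a e1 e2].
Proof.
move=> e1u V_anti; have r0 := r_gt0.
case: (pselect (exists w0, [/\ V w0, dot (w0 - c) e1 = 0 & sqnorm (w0 - c) = 2 * r ^+ 2]))
  => [[w0 [Vw0 w0_1 w0_n]]|none]; last first.
  have [e2 [e2u [e12 _]]] := exists_unit_orthogonal e1 e1.
  by exists e2; split => // w Vw w1 wn _ _; apply: none; exists w.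
set k := enorm (w0 - c).
have k2 : k ^+ 2 = 2 * r ^+ 2 by rewrite enorm_sqr.
have rk : r < k.
  rewrite ltNge; apply/negP => kr.
  by have := lerXn2r 2 (enorm_ge0 (w0 - c)) (ltW r0) kr; rewrite -/k k2; nra.
have k_gt0 : 0 < k by lra.
set e2 := dir c w0.
have e2u : sqnorm e2 = 1 by apply: sqnorm_dir.
have w0k : w0 - c = k *: e2 by apply: dir_scale.
have e12 : dot e1 e2 = 0.
  by move: w0_1; rewrite w0k dotZl dotC => /eqP; rewrite mulf_eq0 gt_eqF //= => /eqP.
exists e2; split => // w Vw w1 wn wa w2.
have w3 : dot (w - c) (cross e1 e2) ^+ 2 = r ^+ 2.
  by move: (sqnorm_frame (w - c) e1u e2u e12); rewrite wn w1 w2; lra.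
have [w2_lt0|w2_gt0|w2_0] := ltgtP (dot (w - c) e2) 0.
- apply: (no_diagonal_vertex_beside e1u e2u e12 Vw0 w0k rk (V_anti w Vw wa));
    rewrite reflect_sub dotNl ?sqrrN //; lra.
- exact: (no_diagonal_vertex_beside e1u e2u e12 Vw0 w0k rk Vw w1 w2_gt0 w2 w3).
- by move: w2; rewrite w2_0; nra.
Qed.

Lemma vertex_axial_segment (a : R) (e1 e2 : pt) v1 w :
  V v1 -> V (2%:R *: c - v1) -> v1 - c = a *: e1 ->
  sqnorm e1 = 1 -> sqnorm e2 = 1 -> dot e1 e2 = 0 -> V w ->
  0 < dot (w - c) e2 ^+ 2 + dot (w - c) (cross e1 e2) ^+ 2 ->
  exists2 t : R, 0 <= t <= 1 & ((1 - t) * a + t * `|dot (w - c) e1|) ^+ 2 +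
    t ^+ 2 * (dot (w - c) e2 ^+ 2 + dot (w - c) (cross e1 e2) ^+ 2) <= r ^+ 2.
Proof.
move=> Vv1 Vv1' v1a e1u e2u e12 Vw h_gt0.
set x := dot (w - c) e1; set y2 := dot (w - c) e2; set y3 := dot (w - c) (cross e1 e2).
have v1_1 : dot (v1 - c) e1 = a by rewrite v1a dotZl -/(sqnorm e1) e1u mulr1.
have v1_2 : dot (v1 - c) e2 = 0 by rewrite v1a dotZl e12 mulr0.
have v1_3 : dot (v1 - c) (cross e1 e2) = 0 by rewrite v1a dotZl dot_cross_l mulr0.
have off_axis z : dot (z - c) e2 = 0 -> dot (z - c) (cross e1 e2) = 0 -> z <> w.
  by move=> z2 z3 zw; move: h_gt0; rewrite /y2 /y3 -zw z2 z3; lra.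
have [x_ge0|x_lt0] := leP 0 x.
  have [t t01] := vertex_segment_frame_bound e1u e2u e12 Vv1 Vw (off_axis _ v1_2 v1_3).
  rewrite v1_1 v1_2 v1_3 ger0_norm // !mulr0 !add0r !exprMn => le_r.
  by exists t => //; rewrite [t ^+ 2 * _]mulrDr addrA.
have [t t01] := vertex_segment_frame_bound e1u e2u e12 Vv1' Vw (off_axis (2%:R *: c - v1)
  ltac:(by rewrite reflect_sub dotNl v1_2 oppr0) ltac:(by rewrite reflect_sub dotNl v1_3 oppr0)).
rewrite !reflect_sub !dotNl v1_1 v1_2 v1_3 ltr0_norm // !oppr0 !mulr0 !add0r !exprMn => le_r.
exists t => //; rewrite [t ^+ 2 * _]mulrDr addrA.
by have -> : ((1 - t) * a + t * - x) ^+ 2 = ((1 - t) * - a + t * x) ^+ 2 by ring.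
Qed.

Lemma farthest_frame_cylinders_cover (a : R) (e1 e2 : pt) v1 :
  V v1 -> V (2%:R *: c - v1) -> v1 - c = a *: e1 ->
  sqnorm e1 = 1 -> sqnorm e2 = 1 -> dot e1 e2 = 0 ->
  (forall u, V u -> enorm (u - c) <= a) -> diagonal_vertex_free a e1 e2 ->
  cylinders_cover [:: e1; e2; cross e1 e2].
Proof.
move=> Vv1 Vv1' v1a e1u e2u e12 farthest diag w Vw; have r0 := r_gt0.
have a_ge0 : 0 <= a by apply: le_trans (farthest _ Vw); apply: enorm_ge0.
have wP := sqnorm_frame (w - c) e1u e2u e12.
set x := dot (w - c) e1 in wP *; set y2 := dot (w - c) e2 in wP *.
set y3 := dot (w - c) (cross e1 e2) in wP *.
have [h_lt|h_ge] := ltP (y2 ^+ 2 + y3 ^+ 2) (r ^+ 2).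
  by exists e1; rewrite ?inE ?eqxx // wP -/x; lra.
have h_gt0 : 0 < y2 ^+ 2 + y3 ^+ 2 by have := exprn_gt0 2 r0; lra.
have xa : `|x| ^+ 2 + (y2 ^+ 2 + y3 ^+ 2) <= a ^+ 2.
  rewrite real_normK ?num_real // addrA -wP -enorm_sqr.
  by have := lerXn2r 2 (enorm_ge0 (w - c)) a_ge0 (farthest _ Vw).
have [t t01 seg] := vertex_axial_segment Vv1 Vv1' v1a e1u e2u e12 Vw h_gt0.
have bound := segment_axial_bound a_ge0 (normr_ge0 x) (ltW h_gt0) xa t01 seg.
rewrite real_normK ?num_real // in bound.
have [y23|y32|y2_3] := ltgtP (y2 ^+ 2) (y3 ^+ 2).
- by exists (cross e1 e2); rewrite ?inE ?eqxx ?orbT // wP -/x -/y3; lra.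
- by exists e2; rewrite ?inE ?eqxx ?orbT // wP -/x -/y2; lra.
have [lt|ge] := ltP (x ^+ 2 + (y2 ^+ 2 + y3 ^+ 2) / 2) (r ^+ 2).
  by exists e2; rewrite ?inE ?eqxx ?orbT // wP -/x -/y2; lra.
have ge' : r ^+ 2 <= `|x| ^+ 2 + (y2 ^+ 2 + y3 ^+ 2) / 2 by rewrite real_normK ?num_real.
have [/normr0_eq0 x0 ha h2r] := segment_axial_bound_eq a_ge0 (normr_ge0 x) h_gt0 xa t01 seg ge'.
case: (diag w Vw x0).
- by rewrite wP x0 -addrA h2r; ring.
- by apply: enorm_eq_sqr => //; rewrite wP x0 -addrA ha; ring.
- by move: h2r; rewrite y2_3; lra.
Qed.

Lemma exists_covering_frame : exists e1 e2,
  [/\ sqnorm e1 = 1, sqnorm e2 = 1, dot e1 e2 = 0 & cylinders_cover [:: e1; e2; cross e1 e2]].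
Proof.
have [[v0 Vv0]|none] := pselect (exists v0, V v0); last first.
  exists (vec3 1 0 0), (vec3 0 1 0).
  by rewrite /sqnorm /dot !vec3E0 !vec3E1 !vec3E2; split; try ring; move=> w Vw; case: none; exists w.
have [v1 Vv1 farthest] := exists_farthest_vertex Vv0.
set a := enorm (v1 - c) in farthest.
have a_gt0 : 0 < a by apply: lt_trans r_gt0 (vertex_far Vv1).
have e1u : sqnorm (dir c v1) = 1 by apply: sqnorm_dir.
have V_anti u : V u -> enorm (u - c) = a -> V (2%:R *: c - u).
  exact: farthest_vertex_antipode farthest.
have [e2 [e2u e12 diag]] := exists_diagonal_free_axis e1u V_anti.
exists (dir c v1), e2; split => //.
exact: farthest_frame_cylinders_cover Vv1 (V_anti _ Vv1 erefl) (dir_scale a_gt0) e1u e2u e12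
  farthest diag.
Qed.

Lemma eball_sub_cap_body : eball c r `<=` K.
Proof. by move=> x Bx; apply: subset_conv_hull; left. Qed.

Lemma signed_axis_into_ball (e : pt) p : sqnorm e = 1 -> dot (p - c) e != 0 ->
  sqnorm (p - c) - dot (p - c) e ^+ 2 < r ^+ 2 ->
  exists2 u, u \in [:: e; - e] & exists2 lam : R, 0 < lam & enorm (p + lam *: u - c) < r.
Proof.
move=> e1 k_neq0 cyl; set k := dot (p - c) e in k_neq0 cyl.
have proj : enorm (p - c - k *: e) < r.
  apply/(enorm_lt_sqr _ (ltW r_gt0)).
  have -> : sqnorm (p - c - k *: e) = sqnorm (p - c) - 2 * k * dot (p - c) e + k ^+ 2 * sqnorm e.
    by rewrite /sqnorm /dot !mxE; ring.
  by rewrite e1 -/k; lra.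
have [k_lt0|k_gt0|k0] := ltgtP k 0; last by rewrite k0 eqxx in k_neq0.
- exists e; first by rewrite mem_head.
  exists (- k); first by rewrite oppr_gt0.
  by have -> : p + - k *: e - c = p - c - k *: e by apply/rowP => i; rewrite !mxE; ring.
- exists (- e); first by rewrite !inE eqxx orbT.
  exists k => //.
  by have -> : p + k *: - e - c = p - c - k *: e by apply/rowP => i; rewrite !mxE; ring.
Qed.

Lemma far_closure_point_cap p : closure K p -> r < enorm (p - c) ->
  exists2 v, V v & forall e : R, 0 < e -> exists2 y, enorm (y - p) < e & cap v y.
Proof.
move=> Kp rp; set eta := (enorm (p - c) - r) / 2.
have eta_gt0 : 0 < eta by rewrite divr_gt0 // subr_gt0.
have [s sP] := far_vertices_finite (ltr_pwDr eta_gt0 (lexx r)).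
have [v vs Qv] : exists2 v, v \in s &
    forall e : R, 0 < e -> exists2 y, enorm (y - p) < e & V v /\ cap v y.
  apply: exists_index_approximating => e e_gt0.
  have m_gt0 : 0 < Num.min e eta by rewrite lt_min e_gt0 eta_gt0.
  have [y Ky] := closure_enorm_approx Kp m_gt0; rewrite lt_min => /andP[ye yeta].
  have yc : r + eta < enorm (y - c).
    have : enorm (p - c) = r + 2 * eta by rewrite /eta; field.
    by have := ler_enormB p y c; rewrite (enorm_subC p y); lra.
  case: (cap_body_cover Ky) => [By|[v Vv [a [b [a01 [Bb E]]]]]].
    by move: By; rewrite /eball /=; lra.
  exists y => //; exists v; last by split => //; exists a, b.
  apply: sP => //; have := enorm_cap_le v a01 Bb; rewrite -E.
  move: a01 => /andP[a0 a1]; have [//|vc] := leP (r + eta) (enorm (v - c)).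
  have : a * enorm (v - c) <= a * (r + eta) by apply: ler_wpM2l => //; apply: ltW.
  nra.
exists v; first by have [y _ []] := Qv 1 ltr01.
by move=> e /Qv [y yp [_ capy]]; exists y.
Qed.

(* Nearby cap points [a v + (1 - a) b] have [a] bounded below, so pushing them by
   [a mu u] lands uniformly inside the ball. *)
Lemma cap_limit_illuminated (S : set pt) v u p (mu : R) : eball c r `<=` S ->
  r < enorm (v - c) -> 0 < mu -> enorm (v + mu *: u - c) < r -> r < enorm (p - c) ->
  (forall e : R, 0 < e -> exists2 y, enorm (y - p) < e & cap v y) -> illuminates S u p.
Proof.
move=> BS rv mu_gt0 vu rp approx; have r0 := r_gt0.
set eta := (enorm (p - c) - r) / 2; set del := r - enorm (v + mu *: u - c).
have eta_gt0 : 0 < eta by rewrite divr_gt0 // subr_gt0.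
have del_gt0 : 0 < del by rewrite subr_gt0.
set ka := eta / (enorm (v - c) - r).
have ka_gt0 : 0 < ka by rewrite divr_gt0 // subr_gt0.
have e_gt0 : 0 < Num.min eta (ka * del) by rewrite lt_min eta_gt0 mulr_gt0.
have [y yp [a [b [a01 [Bb E]]]]] := approx _ e_gt0.
move: yp; rewrite lt_min => /andP[yeta ydel].
have yc : r + eta < enorm (y - c).
  have : enorm (p - c) = r + 2 * eta by rewrite /eta; field.
  by have := ler_enormB p y c; rewrite (enorm_subC p y); lra.
have := enorm_cap_le v a01 Bb; rewrite -E; move: a01 => /andP[a0 a1] ya.
have ka_a : ka < a.
  by rewrite /ka ltr_pdivrMr ?subr_gt0 //; nra.
exists (a * mu); split; first by rewrite mulr_gt0 //; lra.
apply: (open_ball_interior BS).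
have Ey : y + (a * mu) *: u = a *: (v + mu *: u) + (1 - a) *: b.
  by rewrite E; apply/rowP => i; rewrite !mxE; ring.
have := enorm_cap_le (v + mu *: u) (introT andP (conj a0 a1)) Bb; rewrite -Ey.
have := ler_enormB (p + (a * mu) *: u) (y + (a * mu) *: u) c.
have -> : p + (a * mu) *: u - (y + (a * mu) *: u) = - (y - p).
  by apply/rowP => i; rewrite !mxE; ring.
rewrite enormN; have : a * enorm (v + mu *: u - c) = a * r - a * del by rewrite /del; ring.
nra.
Qed.

Definition signed_axes (E : seq pt) : seq pt := E ++ map -%R E.

Lemma size_signed_axes E : size (signed_axes E) = (size E).*2.
Proof. by rewrite size_cat size_map addnn. Qed.

Lemma signed_axes_illuminate (E : seq pt) : (forall e, e \in E -> sqnorm e = 1) ->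
  (forall x, (forall e, e \in E -> dot x e = 0) -> x = 0) -> cylinders_cover E ->
  illuminating_family K (signed_axes E).
Proof.
move=> E_unit E_span E_cover; have r0 := r_gt0.
have signed u e : e \in E -> u \in [:: e; - e] -> u \in signed_axes E.
  move=> eE; rewrite !inE mem_cat => /orP[/eqP->|/eqP->]; first by rewrite eE.
  by rewrite map_f ?orbT.
split.
  move=> u; rewrite mem_cat => /orP[uE|/mapP[e eE ->]]; apply: enorm_unit.
    exact: E_unit.
  by rewrite sqnormN E_unit.
move=> p [Kp Kp_int].
have [pr|rp] := leP (enorm (p - c)) r.
  have [pc|pc] := eqVneq (p - c) 0.
    by case: Kp_int; apply: (open_ball_interior eball_sub_cap_body); rewrite pc enorm0.
  have [e eE pe] : exists2 e, e \in E & dot (p - c) e != 0.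
    apply: contra_notP (negP pc) => none; apply/eqP/E_span => e eE.
    by apply/eqP; apply: contra_notT none => pe; exists e.
  have cyl : sqnorm (p - c) - dot (p - c) e ^+ 2 < r ^+ 2.
    have : 0 < dot (p - c) e ^+ 2 by rewrite lt_neqAle sqr_ge0 eq_sym sqrf_eq0 pe.
    by move/(enorm_le_sqr _ (ltW r0)): pr; lra.
  have [u ue [lam lam_gt0 pu]] := signed_axis_into_ball (E_unit _ eE) pe cyl.
  exists u; first exact: signed ue.
  by exists lam; split => //; apply: (open_ball_interior eball_sub_cap_body).
have [v Vv v_cap] := far_closure_point_cap Kp rp.
have [e eE cyl] := E_cover _ Vv.
have ve : dot (v - c) e != 0.
  apply/eqP => ve0; apply: (vertex_outside Vv); rewrite /eball /=.
  by apply/(enorm_le_sqr _ (ltW r0)); move: cyl; rewrite ve0; lra.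
have [u ue [mu mu_gt0 vu]] := signed_axis_into_ball (E_unit _ eE) ve cyl.
exists u; first exact: signed ue.
exact: cap_limit_illuminated eball_sub_cap_body (vertex_far Vv) mu_gt0 vu rp v_cap.
Qed.

End CapBody.

Lemma cap_body_symmetric_illumination_le6 (R : realType) (K : set 'rV[R]_3) :
  is_cap_body_of_ball K -> centrally_symmetric K -> illumination_number_le K 6.
Proof.
move=> [c [r [V [r_gt0 [_ [V_out [V_seg ->]]]]]]] [m Km].
have mc : m = c by apply: (symmetry_center_eq r_gt0 V_out V_seg) => x /(Km x).1.
have K_sym x : conv_hull (eball c r `|` V) x -> conv_hull (eball c r `|` V) (2%:R *: c - x).
  by move=> Kx; have := (Km x).1 Kx; rewrite mc.
have [e1 [e2 [e1u e2u e12 cover]]] := exists_covering_frame r_gt0 V_out V_seg K_sym.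
have E_unit e : e \in [:: e1; e2; cross e1 e2] -> sqnorm e = 1.
  by rewrite !inE => /or3P[] /eqP->; rewrite ?sqnorm_cross_unit.
have E_span x : (forall e, e \in [:: e1; e2; cross e1 e2] -> dot x e = 0) -> x = 0.
  move=> x0; apply: sqnorm_eq0.
  by rewrite (sqnorm_frame x e1u e2u e12) !x0 ?inE ?eqxx ?orbT // expr0n /= !addr0.
exists (signed_axes [:: e1; e2; cross e1 e2]); rewrite size_signed_axes; split => //.
exact: (signed_axes_illuminate r_gt0 V_out V_seg E_unit E_span cover).
Qed.

Section Octahedron.
Variable R : realType.
Notation pt := 'rV[R]_3.
Implicit Types (x y z n u : pt) (p q : 'I_3 * bool).

Definition sqrt2 : R := Num.sqrt 2.

Lemma sqrt2_sqr : sqrt2 ^+ 2 = 2. Proof. by rewrite sqr_sqrtr // ler0n. Qed.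

Lemma sqrt2_gt0 : 0 < sqrt2. Proof. by rewrite sqrtr_gt0 ltr0n. Qed.

Lemma signs_of_same_axis p q : p != q -> p.1 = q.1 -> q.2 = ~~ p.2.
Proof. by case: p q => [i []] [j []] pq /= ij //; rewrite ij eqxx in pq. Qed.

Definition octa_vertex p : pt :=
  \row_k (if k == p.1 then (-1) ^+ p.2 * sqrt2 else 0).

Definition octa_cap_body : set pt := conv_hull (eball 0 1 `|` range octa_vertex).

Lemma dot_octa_vertex p n : dot (octa_vertex p) n = (-1) ^+ p.2 * sqrt2 * n ord0 p.1.
Proof.
rewrite dot_sum (bigD1 p.1) //= mxE eqxx big1 ?addr0 // => k /= kp.
by rewrite mxE (negPf kp) mul0r.
Qed.

Lemma sqnorm_octa_vertex p : sqnorm (octa_vertex p) = 2.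
Proof.
rewrite /sqnorm dot_octa_vertex mxE eqxx mulrACA -expr2 sqrr_sign mul1r.
by rewrite -expr2 sqrt2_sqr.
Qed.

Lemma octa_vertexN p : - octa_vertex p = octa_vertex (p.1, ~~ p.2).
Proof. by apply/rowP => k; rewrite !mxE signrN; case: ifP; rewrite ?mulNr ?oppr0. Qed.

Lemma octa_segments_meet_ball x y : range octa_vertex x -> range octa_vertex y -> x <> y ->
  segment x y `&` eball 0 1 !=set0.
Proof.
move=> [p _ <-] [q _ <-] pq; exists ((1 - 1 / 2) *: octa_vertex p + (1 / 2) *: octa_vertex q).
split; first by exists (1 / 2); split => //; apply/andP; split; lra.
rewrite /eball /= subr0; apply/(enorm_le_sqr _ ler01).
have -> : sqnorm ((1 - 1 / 2) *: octa_vertex p + (1 / 2) *: octa_vertex q) =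
    (sqnorm (octa_vertex p) + 2 * dot (octa_vertex p) (octa_vertex q) +
     sqnorm (octa_vertex q)) / 4 by rewrite /sqnorm /dot !mxE; field.
rewrite !sqnorm_octa_vertex dot_octa_vertex mxE.
suff : (-1) ^+ p.2 * sqrt2 * (if p.1 == q.1 then (-1) ^+ q.2 * sqrt2 else 0) <= 0 by lra.
case: eqP => [pq1|]; last by rewrite mulr0.
have pq2 : q.2 = ~~ p.2.
  by apply: (signs_of_same_axis _ pq1); apply/eqP => e; apply: pq; rewrite e.
by rewrite pq2 signrN mulNr mulrN mulrACA -expr2 sqrr_sign mul1r -expr2 sqrt2_sqr; lra.
Qed.

Lemma octa_is_cap_body : is_cap_body_of_ball octa_cap_body.
Proof.
exists 0, 1, (range octa_vertex); split; first exact: ltr01.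
split; first exact/finite_set_countable/finite_image/finite_finset.
split; last by split => //; apply: octa_segments_meet_ball.
apply/seteqP; split => // x [[p _ <-]]; rewrite /eball /= subr0 enorm_le_sqr ?ler01 //.
by rewrite sqnorm_octa_vertex; lra.
Qed.

Lemma octa_symmetric : centrally_symmetric octa_cap_body.
Proof.
have KN x : octa_cap_body x -> octa_cap_body (- x).
  apply: conv_hullN => y [By|[p _ <-]]; last by right; rewrite octa_vertexN; exists (p.1, ~~ p.2).
  by left; move: By; rewrite /eball /= !subr0 enormN.
by exists 0 => x; rewrite scaler0 sub0r; split => [/KN|/KN]; rewrite ?opprK.
Qed.

Definition supp_normal (i j : 'I_3) (s t : bool) : pt :=
  \row_k (if k == i then (-1) ^+ s else if k == j then (-1) ^+ t else 0).

Lemma dot_supp_normal i j s t x : j != i ->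
  dot x (supp_normal i j s t) = (-1) ^+ s * x ord0 i + (-1) ^+ t * x ord0 j.
Proof.
move=> ji; rewrite dot_sum (bigD1 i) //= (bigD1 j) //= big1 ?addr0.
  by rewrite !mxE eqxx (negPf ji) eqxx ![_ * (-1) ^+ _]mulrC.
by move=> k /andP[/negPf ki /negPf kj]; rewrite mxE ki kj mulr0.
Qed.

Lemma sqnorm_supp_normal i j s t : j != i -> sqnorm (supp_normal i j s t) = 2.
Proof.
by move=> ji; rewrite /sqnorm dot_supp_normal // !mxE eqxx (negPf ji) eqxx -!expr2 !sqrr_sign.
Qed.

(* The planes [dot x n = sqrt2], [n = supp_normal i j s t], support the cap body at
   the vertex [octa_vertex (i, s)]. *)
Lemma octa_cap_body_supp i j s t : j != i ->
  forall x, octa_cap_body x -> dot x (supp_normal i j s t) <= sqrt2.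
Proof.
move=> ji x Kx; rewrite -[x]subr0.
apply: (cap_body_halfspace ltr01 octa_segments_meet_ball _ _ Kx).
  by rewrite mul1r enormE sqnorm_supp_normal.
move=> _ [p _ <-]; rewrite subr0 dot_octa_vertex -mulrA mulrC -mulrA ler_piMr //.
  exact: ltW sqrt2_gt0.
rewrite mxE; case: ifP => _; last case: ifP => _; rewrite ?mulr0 ?ler01 //.
all: by rewrite -signr_addb; case: (_ (+) _); rewrite ?expr0 ?expr1 ?lexx //; lra.
Qed.

Lemma octa_supp_normal_lt i j s t x : j != i -> interior octa_cap_body x ->
  dot x (supp_normal i j s t) < sqrt2.
Proof.
move=> ji; apply: interior_halfspace_lt (octa_cap_body_supp s t ji).
by rewrite enormE sqnorm_supp_normal // sqrtr_gt0 ltr0n.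
Qed.

Lemma octa_vertex_boundary p : boundary octa_cap_body (octa_vertex p).
Proof.
split; first by apply: subset_closure; apply: subset_conv_hull; right; exists p.
have jp : lift p.1 ord0 != p.1 by rewrite eq_sym neq_lift.
move/(octa_supp_normal_lt p.2 false jp).
by rewrite dot_octa_vertex mxE eqxx mulrAC -expr2 sqrr_sign mul1r ltxx.
Qed.

Lemma octa_illuminating_cone p u j : illuminates octa_cap_body u (octa_vertex p) ->
  j != p.1 -> `|u ord0 j| < - ((-1) ^+ p.2 * u ord0 p.1).
Proof.
move=> [lam [lam_gt0 int]] jp.
have lt0 (t : bool) : (-1) ^+ p.2 * u ord0 p.1 + (-1) ^+ t * u ord0 j < 0.
  have := octa_supp_normal_lt p.2 t jp int.
  have -> n : dot (octa_vertex p + lam *: u) n = dot (octa_vertex p) n + lam * dot u n.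
    by rewrite /dot !mxE; ring.
  rewrite dot_octa_vertex dot_supp_normal // !mxE eqxx mulrAC -expr2 sqrr_sign mul1r.
  by rewrite gtrDl pmulr_rlt0.
have := lt0 false; have := lt0 true.
rewrite [(-1) ^+ false * _]mulr_sign [(-1) ^+ true * _]mulr_sign /= => lt1 lt2.
by rewrite ltr_norml; apply/andP; split; lra.
Qed.

Lemma octa_cones_disjoint p q u : p != q ->
  (forall j, j != p.1 -> `|u ord0 j| < - ((-1) ^+ p.2 * u ord0 p.1)) ->
  (forall j, j != q.1 -> `|u ord0 j| < - ((-1) ^+ q.2 * u ord0 q.1)) -> False.
Proof.
move=> pq cone_p cone_q.
have sign_le b (x : R) : - ((-1) ^+ b * x) <= `|x|.
  by apply: le_trans (ler_norm _) _; rewrite normrN normrM normr_sign mul1r.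
have [e1|n1] := eqVneq p.1 q.1.
  have e2 := signs_of_same_axis pq e1.
  have jp : lift p.1 ord0 != p.1 by rewrite eq_sym neq_lift.
  have jq : lift p.1 ord0 != q.1 by rewrite -e1.
  have := cone_p _ jp; have := cone_q _ jq; rewrite -e1 e2 signrN mulNr opprK.
  by have := normr_ge0 (u ord0 (lift p.1 ord0)); lra.
have n1' : q.1 != p.1 by rewrite eq_sym.
have := cone_p _ n1'; have := cone_q _ n1.
by have := sign_le p.2 (u ord0 p.1); have := sign_le q.2 (u ord0 q.1); lra.
Qed.

Lemma octa_illumination_ge6 D : illuminating_family octa_cap_body D -> (6 <= size D)%N.
Proof.
move=> [_ illum].
have illum_vertex p : exists u, u \in D /\ illuminates octa_cap_body u (octa_vertex p).
  by have [u uD ill] := illum _ (octa_vertex_boundary p); exists u.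
have [f fP] := choice illum_vertex.
have f_inj : injective f.
  move=> p q fpq; have [//|pq] := eqVneq p q; exfalso.
  apply: (octa_cones_disjoint (u := f p) pq) => j.
  - exact: octa_illuminating_cone (fP p).2.
  - by rewrite fpq; apply: octa_illuminating_cone (fP q).2.
have fD : {subset codom f <= D} by move=> _ /codomP[p ->]; apply: (fP p).1.
have f_uniq : uniq (codom f) by rewrite codomE map_inj_uniq ?enum_uniq.
by have := uniq_leq_size f_uniq fD; rewrite size_codom card_prod !card_ord card_bool.
Qed.

Lemma octa_illumination_number : illumination_number_eq octa_cap_body 6.
Proof.
split; first exact: cap_body_symmetric_illumination_le6 octa_is_cap_body octa_symmetric.
by move=> m [D [Dm /octa_illumination_ge6 D6]]; apply: leq_trans D6 Dm.
Qed.

End Octahedron.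

Theorem theorem2 (R : realType) :
  (forall K : set 'rV[R]_3,
      is_cap_body_of_ball K -> centrally_symmetric K ->
      illumination_number_le K 6) /\
  (exists K : set 'rV[R]_3,
      is_cap_body_of_ball K /\ centrally_symmetric K /\
      illumination_number_eq K 6).
Proof.
split; first by move=> K; apply: cap_body_symmetric_illumination_le6.
exists (@octa_cap_body R); split; first exact: octa_is_cap_body.
by split; [exact: octa_symmetric | exact: octa_illumination_number].
Qed.
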